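(* Let $X$ and $Y$ be Banach spaces and $\kappa$ an infinite cardinal. Then $X\oplus_\infty Y$ is $\mathrm{ASQ}_{<\kappa}$ if and only if $X$ or $Y$ is $\mathrm{ASQ}_{<\kappa}$. Likewise, $X\oplus_\infty Y$ is $\mathrm{SQ}_{<\kappa}$ if and only if $X$ or $Y$ is $\mathrm{SQ}_{<\kappa}$.
   Context: $X\oplus_\infty Y$ is $X\times Y$ with norm $\|(x,y)\|=\max\{\|x\|,\|y\|\}$. A Banach space $Z$ is $\mathrm{ASQ}_{<\kappa}$ if for every set $A\subset S_Z$ with $|A|<\kappa$ and every $\varepsilon>0$ there exists $y\in S_Z$ with $\|x\pm y\|\le 1+\varepsilon$ for all $x\in A$; $Z$ is $\mathrm{SQ}_{<\kappa}$ if for every such $A$ there exists $y\in S_Z$ with $\|x\pm y\|\le 1$ for all $x\in A$. *)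

From HB Require Import structures.
From mathcomp Require Import all_boot all_order all_algebra.
From mathcomp Require Import all_classical all_reals all_analysis.
Set Implicit Arguments. Unset Strict Implicit. Unset Printing Implicit Defensive.
Import Order.TTheory GRing.Theory Num.Theory.
Import numFieldNormedType.Exports.
Local Open Scope classical_set_scope.
Local Open Scope ring_scope.

(* The cardinal kappa is represented by (the cardinality of) a type K.
   "|A| < kappa" is  A #<= [set: K] /\ ~ ([set: K] #<= A). *)
Definition card_lt_type {T : Type} (A : set T) (K : Type) : Prop :=
  (A #<= [set: K])%card /\ ~ ([set: K] #<= A)%card.

Definition unit_sphere (R : realType) (Z : normedModType R) : set Z :=
  [set x : Z | `|x| = 1].
Arguments unit_sphere : clear implicits.

Definition ASQ_lt {R : realType} (K : Type) (Z : normedModType R) : Prop :=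
  forall A : set Z, A `<=` unit_sphere R Z -> card_lt_type A K ->
  forall eps : R, 0 < eps ->
  exists2 y : Z, unit_sphere R Z y &
    forall x, A x -> `|x + y| <= 1 + eps /\ `|x - y| <= 1 + eps.

Definition SQ_lt {R : realType} (K : Type) (Z : normedModType R) : Prop :=
  forall A : set Z, A `<=` unit_sphere R Z -> card_lt_type A K ->
  exists2 y : Z, unit_sphere R Z y &
    forall x, A x -> `|x + y| <= 1 /\ `|x - y| <= 1.

(* If [y] in S_X works for the normalised first coordinates of a set A of
   size < kappa in S_(X (+)_oo Y), then [(y, 0)] works for A: by convexity of
   the norm, |u +- y| <= 1 + e implies |t u +- y| <= 1 + e for 0 <= t <= 1,
   and the second coordinates lie in the unit ball.
   Conversely, given A_X in S_X and A_Y in S_Y of size < kappa, cardinal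
   comparability lets one pair the smaller set off against the larger one,
   giving C in S_(X (+)_oo Y) of size < kappa whose projections cover A_X and
   A_Y. A witness for C has a coordinate of norm 1, and that coordinate is a
   witness for A_X or for A_Y. As this holds for every pair (A_X, A_Y), X or
   Y is SQ with error e; for ASQ take e = min (e_X, e_Y). *)

From HB Require Import structures.
From mathcomp Require Import all_boot all_order all_algebra.
From mathcomp Require Import all_classical all_reals all_analysis.
From mathcomp Require Import ring lra.
Import Order.TTheory GRing.Theory Num.Theory.
Import numFieldNormedType.Exports.
Local Open Scope classical_set_scope.
Local Open Scope ring_scope.
Set Implicit Arguments. Unset Strict Implicit. Unset Printing Implicit Defensive.

Section Matching.
Variables (T U : Type) (A : set T) (B : set U).

Definition set_matching (G : set (T * U)) :=
  [/\ G `<=` A `*` B, {in G &, injective fst} & {in G &, injective snd}].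

Lemma set_matching_card_eq G : set_matching G -> (fst @` G #= snd @` G)%card.
Proof.
case=> _ inj1 inj2.
exact: card_eq_trans (inj_card_eq inj1) (card_esym (inj_card_eq inj2)).
Qed.

Lemma set_matching_bigcup (F : set (set (T * U))) :
  F `<=` set_matching -> total_on F subset ->
  set_matching (\bigcup_(G in F) G).
Proof.
move=> Fm Ftot.
have common p q : (\bigcup_(G in F) G) p -> (\bigcup_(G in F) G) q ->
    exists2 G, set_matching G & G p /\ G q.
  move=> [G FG Gp] [H FH Hq].
  have [GH|HG] := Ftot G H FG FH.
  - by exists H; [exact: Fm | split=> //; exact: GH].
  - by exists G; [exact: Fm | split=> //; exact: HG].
split.
- by move=> p [G /Fm[GAB _ _] /GAB].
- move=> p q /[!in_setE] /common/[apply] -[G [_ inj _] [Gp Gq]].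
  by apply: inj; rewrite in_setE.
- move=> p q /[!in_setE] /common/[apply] -[G [_ _ inj] [Gp Gq]].
  by apply: inj; rewrite in_setE.
Qed.

Lemma set_matching_setU1 G x y : set_matching G -> A x -> B y ->
  ~ (fst @` G) x -> ~ (snd @` G) y -> set_matching (G `|` [set (x, y)]).
Proof.
move=> [GAB inj1 inj2] Ax By xG yG; split.
- by move=> p [/GAB //|->].
- move=> p q /[!in_setE] -[Gp|->] [Gq|->] //= pq.
  + by apply: inj1; rewrite ?in_setE.
  + by case: xG; exists p.
  + by case: xG; exists q.
- move=> p q /[!in_setE] -[Gp|->] [Gq|->] //= pq.
  + by apply: inj2; rewrite ?in_setE.
  + by case: yG; exists p.
  + by case: yG; exists q.
Qed.

End Matching.

Lemma card_le_total (T U : Type) (A : set T) (B : set U) :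
  (A #<= B)%card \/ (B #<= A)%card.
Proof.
have [G [Gm Gmax]] := Zorn_bigcup (@set_matching_bigcup _ _ A B).
have Geq := set_matching_card_eq Gm.
have [AG|/nonsubset[x [Ax xG]]] := pselect (A `<=` fst @` G).
  left; apply: card_le_trans (subset_card_le AG) _.
  rewrite (card_le_eql Geq); apply: subset_card_le.
  by case: Gm => GAB _ _ _ [p /GAB[_ ?] <-].
have [BG|/nonsubset[y [By yG]]] := pselect (B `<=` snd @` G).
  right; apply: card_le_trans (subset_card_le BG) _.
  rewrite -(card_le_eql Geq); apply: subset_card_le.
  by case: Gm => GAB _ _ _ [p /GAB[? _] <-].
exfalso; apply: (Gmax _ _ (set_matching_setU1 Gm Ax By xG yG)).
split; first exact: subsetUl.
by move=> /(_ (x, y) (or_intror erefl)) Gxy; apply: xG; exists (x, y).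
Qed.

Lemma card_le_surj (T U : Type) (x0 : T) (A : set T) (B : set U) :
  (A #<= B)%card -> exists2 s : U -> T, s @` B `<=` x0 |` A & A `<=` s @` B.
Proof.
case/pfcard_geP => [->|[f]].
  by exists (fun=> x0) => // _ [y _ <-]; left.
by exists f => [_ [y By <-]|]; [right; exact: funS | exact: 'surj_f].
Qed.

Lemma card_lt_type_le (T U K : Type) (A : set T) (B : set U) :
  (A #<= B)%card -> card_lt_type B K -> card_lt_type A K.
Proof.
move=> AB [BK KB]; split; first exact: card_le_trans AB BK.
by move=> KA; apply: KB; apply: card_le_trans KA AB.
Qed.

Section PlusMinus.
Variables (R : realFieldType) (Z : normedModType R).
Implicit Types (x y : Z) (r t : R).

Definition pm_le r y x := `|x + y| <= r /\ `|x - y| <= r.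

Lemma pm_leN r y x : pm_le r (- y) x <-> pm_le r y x.
Proof. by rewrite /pm_le opprK and_comm. Qed.

Lemma pm_leC r y x : pm_le r y x <-> pm_le r x y.
Proof. by rewrite /pm_le addrC distrC. Qed.

Lemma pm_le0 r y : pm_le r y 0 <-> `|y| <= r.
Proof. by rewrite /pm_le add0r sub0r normrN; split=> [[]|]. Qed.

Lemma ler_norm_convex (a b : Z) r t : 0 <= t <= 1 ->
  `|a| <= r -> `|b| <= r -> `|t *: a + (1 - t) *: b| <= r.
Proof.
move=> /andP[t0 t1] ar br; apply: le_trans (ler_normD _ _) _.
rewrite !normrZ !ger0_norm ?subr_ge0 //.
have t1' : 0 <= 1 - t by rewrite subr_ge0.
have := ler_wpM2l t0 ar; have := ler_wpM2l t1' br; lra.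
Qed.

Lemma pm_leZ r t y x : 0 <= t <= 1 -> pm_le r y x -> pm_le r y (t *: x).
Proof.
move=> /andP[t0 t1].
have s01 : 0 <= (1 + t) / 2 <= 1 by apply/andP; split; lra.
suff plus y' : pm_le r y' x -> `|t *: x + y'| <= r.
  by move=> xy; split; [exact: plus | have /plus := (pm_leN r y x).2 xy].
case=> xy xy'; rewrite distrC in xy'.
have -> : t *: x + y' = ((1 + t) / 2) *: (x + y') + (1 - (1 + t) / 2) *: (y' - x).
  rewrite scalerDr scalerBr [_ *: y' - _]addrC addrACA -scalerBl -scalerDl.
  by rewrite -[in LHS](scale1r y'); congr (_ *: _ + _ *: _); field.
exact: ler_norm_convex.
Qed.

Lemma pm_le_ball r y x : `|y| <= r -> `|x| <= 1 ->
  (x != 0 -> pm_le r y (`|x|^-1 *: x)) -> pm_le r y x.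
Proof.
move=> yr x1 hx; have [->|x0] := eqVneq x 0; first exact/pm_le0.
have nx0 : `|x| != 0 by rewrite normr_eq0.
rewrite -[x]scale1r -(divff nx0) -scalerA.
by apply: pm_leZ (hx x0); rewrite normr_ge0.
Qed.

End PlusMinus.

Lemma pm_le_pair (R : realFieldType) (X Y : normedModType R) r (y x : X * Y) :
  pm_le r y x <-> pm_le r y.1 x.1 /\ pm_le r y.2 x.2.
Proof.
rewrite /pm_le !prod_normE /= !ge_max.
by split=> [[/andP[? ?] /andP[? ?]]|[[-> ->] [-> ->]]].
Qed.

Section SquareWithError.
Variables (R : realType) (K : Type).

Definition SQ_lt_eps (Z : normedModType R) (e : R) : Prop :=
  forall A : set Z, A `<=` unit_sphere R Z -> card_lt_type A K ->
  exists2 y : Z, unit_sphere R Z y & A `<=` pm_le (1 + e) y.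

Lemma SQ_ltE (Z : normedModType R) : SQ_lt K Z <-> SQ_lt_eps Z 0.
Proof. by rewrite /SQ_lt /SQ_lt_eps addr0. Qed.

Lemma ASQ_ltE (Z : normedModType R) :
  ASQ_lt K Z <-> forall e : R, 0 < e -> SQ_lt_eps Z e.
Proof.
by split=> [H e e0 A SA KA|H A SA KA e e0]; [exact: H | exact: H].
Qed.

Lemma SQ_lt_eps_le (Z : normedModType R) (e e' : R) :
  e <= e' -> SQ_lt_eps Z e -> SQ_lt_eps Z e'.
Proof.
move=> ee' H A SA KA; have [y Sy Ay] := H A SA KA; exists y => // x /Ay[h1 h2].
by rewrite -(lerD2l 1) in ee'; split; apply: le_trans ee'.
Qed.

End SquareWithError.

Lemma unit_sphere_pair (R : realType) (X Y : normedModType R) (p : X * Y) :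
  unit_sphere R (X * Y)%type p <->
  [/\ `|p.1| <= 1, `|p.2| <= 1 & `|p.1| = 1 \/ `|p.2| = 1].
Proof.
rewrite /unit_sphere /= prod_normE; split=> [pm|[p1 p2 [->|->]]].
- split; [by rewrite -pm le_max lexx | by rewrite -pm le_max lexx orbT |].
  by move: pm; rewrite maxEle; case: ifP; [right | left].
- exact: max_l.
- exact: max_r.
Qed.

Section ProductSquare.
Variables (R : realType) (K : Type).

Lemma SQ_lt_eps_pairl (X Y : normedModType R) (e : R) :
  0 <= e -> SQ_lt_eps K X e -> SQ_lt_eps K (X * Y)%type e.
Proof.
move=> e0 HX A SA KA.
pose B := (fun p : X * Y => `|p.1|^-1 *: p.1) @` (A `&` [set p | p.1 != 0]).
have SB : B `<=` unit_sphere R X.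
  move=> _ [p [_ /= p0] <-]; rewrite /unit_sphere /= normrZ normfV normr_id.
  by rewrite mulVf // normr_eq0.
have KB : card_lt_type B K.
  apply: card_lt_type_le KA; apply: card_le_trans (card_image_le _ _) _.
  exact: subset_card_le (@subIsetl _ _ _).
have [y Sy By] := HX B SB KB.
exists (y, 0).
  by apply/unit_sphere_pair; rewrite normr0 Sy; split; [|exact: ler01|left].
move=> p Ap; have /unit_sphere_pair[p1 p2 _] := SA p Ap.
apply/pm_le_pair; split=> /=.
  apply: pm_le_ball p1 _ => [|p0]; first by rewrite Sy; lra.
  by apply: By; exists p.
by apply/pm_leC/pm_le0; lra.
Qed.

Lemma SQ_lt_eps_swap (X Y : normedModType R) (e : R) :
  SQ_lt_eps K (X * Y)%type e -> SQ_lt_eps K (Y * X)%type e.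
Proof.
pose sw (U V : Type) (p : U * V) := (p.2, p.1).
have sw_sphere (U V : normedModType R) (p : U * V) :
    unit_sphere R (U * V)%type p -> unit_sphere R (V * U)%type (sw U V p).
  move=> /unit_sphere_pair[p1 p2 p12]; apply/unit_sphere_pair.
  by split=> //; case: p12; auto.
move=> H A SA KA.
have SB : sw Y X @` A `<=` unit_sphere R (X * Y)%type.
  by move=> _ [p Ap <-]; exact/sw_sphere/SA.
have [y Sy Ay] := H _ SB (card_lt_type_le (card_image_le _ _) KA).
exists (sw X Y y); first exact: sw_sphere.
move=> p Ap; have /pm_le_pair[h1 h2] := Ay _ (imageP (sw Y X) Ap).
exact/pm_le_pair.
Qed.

Lemma SQ_lt_eps_pairr (X Y : normedModType R) (e : R) :
  0 <= e -> SQ_lt_eps K Y e -> SQ_lt_eps K (X * Y)%type e.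
Proof. by move=> e0 /(SQ_lt_eps_pairl (Y := X) e0)/SQ_lt_eps_swap. Qed.

Lemma unit_sphere_pair_cover (X Y : normedModType R) (AX : set X) (AY : set Y) :
  AX `<=` unit_sphere R X -> AY `<=` unit_sphere R Y ->
  exists C : set (X * Y), [/\ C `<=` unit_sphere R (X * Y)%type,
    (C #<= AX \/ C #<= AY)%card, AX `<=` fst @` C & AY `<=` snd @` C].
Proof.
move=> SX SY; have [le|le] := card_le_total AX AY.
- have [s sAY AXs] := card_le_surj 0 le.
  have s1 y : AY y -> `|s y| <= 1.
    by move=> /(imageP s)/sAY[->|/SX->]; rewrite ?normr0.
  exists ((fun y => (s y, y)) @` AY); split.
  + move=> _ [y Ay <-]; apply/unit_sphere_pair; rewrite /= SY //.
    by split=> //; [exact: s1 | right].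
  + by right; exact: card_image_le.
  + by move=> _ /AXs[y Ay <-]; exists (s y, y) => //; exists y.
  + by move=> y Ay; exists (s y, y) => //; exists y.
- have [t tAX AYt] := card_le_surj 0 le.
  have t1 x : AX x -> `|t x| <= 1.
    by move=> /(imageP t)/tAX[->|/SY->]; rewrite ?normr0.
  exists ((fun x => (x, t x)) @` AX); split.
  + move=> _ [x Ax <-]; apply/unit_sphere_pair; rewrite /= SX //.
    by split=> //; [exact: t1 | left].
  + by left; exact: card_image_le.
  + by move=> x Ax; exists (x, t x) => //; exists x.
  + by move=> _ /AYt[x Ax <-]; exists (x, t x) => //; exists x.
Qed.

Lemma SQ_lt_eps_pair_split (X Y : normedModType R) (e : R)
    (AX : set X) (AY : set Y) :
  SQ_lt_eps K (X * Y)%type e ->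
  AX `<=` unit_sphere R X -> card_lt_type AX K ->
  AY `<=` unit_sphere R Y -> card_lt_type AY K ->
  (exists2 u, unit_sphere R X u & AX `<=` pm_le (1 + e) u) \/
  (exists2 v, unit_sphere R Y v & AY `<=` pm_le (1 + e) v).
Proof.
move=> H SX KX SY KY; have [C [SC KC CX CY]] := unit_sphere_pair_cover SX SY.
have {}KC : card_lt_type C K by case: KC => /card_lt_type_le; apply.
have [w /unit_sphere_pair[_ _ [w1|w2]] Cw] := H C SC KC.
- by left; exists w.1 => // _ /CX[p /Cw/pm_le_pair[]] + _ <-.
- by right; exists w.2 => // _ /CY[p /Cw/pm_le_pair[]] _ + <-.
Qed.

Lemma SQ_lt_eps_pair (X Y : normedModType R) (e : R) : 0 <= e ->
  SQ_lt_eps K (X * Y)%type e <-> SQ_lt_eps K X e \/ SQ_lt_eps K Y e.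
Proof.
move=> e0; split=> [H|]; last first.
  by case; [exact: SQ_lt_eps_pairl | exact: SQ_lt_eps_pairr].
have [|nX] := pselect (SQ_lt_eps K X e); [by left | right].
move=> AY SY KY; apply: contrapT => nY; apply: nX => AX SX KX.
by have [//|vY] := SQ_lt_eps_pair_split H SX KX SY KY.
Qed.

End ProductSquare.

Theorem corollary4p2 (R : realType) (X Y : completeNormedModType R) (K : Type) :
  infinite_set [set: K] ->
  (ASQ_lt K (X * Y)%type <-> ASQ_lt K X \/ ASQ_lt K Y) /\
  (SQ_lt K (X * Y)%type <-> SQ_lt K X \/ SQ_lt K Y).
Proof.
(* kappa need not be infinite: pairing bounds the size of the joint set by
   max (|A_X|, |A_Y|) instead of |A_X| + |A_Y|. *)
move=> _; split; last by rewrite !SQ_ltE; exact: (SQ_lt_eps_pair K X Y (lexx 0)).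
rewrite !ASQ_ltE; split=> [H|HXY e e0]; last first.
  by apply/(SQ_lt_eps_pair K X Y (ltW e0)); case: HXY => H; [left|right]; exact: H.
have [|/existsNP[eX /not_implyP[eX0 nX]]] :=
  pselect (forall e : R, 0 < e -> SQ_lt_eps K X e); [by left | right=> e e0].
have m0 : 0 < Num.min eX e by rewrite lt_min eX0 e0.
have [hX|hY] := (SQ_lt_eps_pair K X Y (ltW m0)).1 (H _ m0).
- by case: nX; apply: SQ_lt_eps_le hX; rewrite ge_min lexx.
- by apply: SQ_lt_eps_le hY; rewrite ge_min lexx orbT.
Qed.
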